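(* There exists a compact Hausdorff space $Y$ such that $\mathrm{K}_1^w(\mathbb R,Y)\setminus \mathrm{H}_1(\mathbb R,Y)\neq\emptyset$.
   Context: $\mathrm{H}_1(X,Y)$: mappings $f:X\to Y$ with $f^{-1}(V)$ an $F_\sigma$-set for every open $V\subseteq Y$. $\mathrm{K}_1^w(X,Y)$: mappings $f:X\to Y$ with $f^{-1}(V)$ a countable union of functionally closed subsets of $X$ for every functionally open $V\subseteq Y$ (functionally closed = zero set of a continuous real function; functionally open = complement of such). *)

From Stdlib Require Import Reals List.
Open Scope R_scope.

Record Topology (X : Type) := {
  is_open : (X -> Prop) -> Prop;
  open_full : is_open (fun _ => True);
  open_empty : is_open (fun _ => False);
  open_inter : forall U V, is_open U -> is_open V ->
                 is_open (fun x => U x /\ V x);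
  open_union : forall F : (X -> Prop) -> Prop,
                 (forall U, F U -> is_open U) ->
                 is_open (fun x => exists U, F U /\ U x)
}.
Arguments is_open {X} _ _.

Definition is_closed {X : Type} (T : Topology X) (A : X -> Prop) : Prop :=
  is_open T (fun x => ~ A x).

Definition R_open (U : R -> Prop) : Prop :=
  forall x, U x -> exists eps, eps > 0 /\ forall y, Rabs (y - x) < eps -> U y.

Lemma R_open_full : R_open (fun _ => True).
Proof. intros x _; exists 1; split; [apply Rlt_0_1 | auto]. Qed.

Lemma R_open_empty : R_open (fun _ => False).
Proof. intros x []. Qed.

Lemma R_open_inter : forall U V, R_open U -> R_open V -> R_open (fun x => U x /\ V x).
Proof.
  intros U V HU HV x [Ux Vx].
  destruct (HU x Ux) as [e1 [He1 H1]]; destruct (HV x Vx) as [e2 [He2 H2]].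
  exists (Rmin e1 e2); split.
  - apply Rmin_pos; assumption.
  - intros y Hy; split.
    + apply H1; apply Rlt_le_trans with (1 := Hy); apply Rmin_l.
    + apply H2; apply Rlt_le_trans with (1 := Hy); apply Rmin_r.
Qed.

Lemma R_open_union : forall F : (R -> Prop) -> Prop,
  (forall U, F U -> R_open U) -> R_open (fun x => exists U, F U /\ U x).
Proof.
  intros F HF x [U [FU Ux]].
  destruct (HF U FU x Ux) as [e [He H]].
  exists e; split; [assumption|]. intros y Hy; exists U; auto.
Qed.

Definition R_topology : Topology R :=
  {| is_open := R_open; open_full := R_open_full; open_empty := R_open_empty;
     open_inter := R_open_inter; open_union := R_open_union |}.

Definition continuous_map {X Y : Type} (TX : Topology X) (TY : Topology Y)
  (f : X -> Y) : Prop :=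
  forall V, is_open TY V -> is_open TX (fun x => V (f x)).

Definition functionally_closed {X : Type} (T : Topology X) (A : X -> Prop) : Prop :=
  exists g : X -> R, continuous_map T R_topology g /\ forall x, A x <-> g x = 0.

Definition functionally_open {X : Type} (T : Topology X) (A : X -> Prop) : Prop :=
  exists B, functionally_closed T B /\ forall x, A x <-> ~ B x.

Definition countable_union_of {X : Type} (P : (X -> Prop) -> Prop) (A : X -> Prop) : Prop :=
  exists C : nat -> X -> Prop, (forall n, P (C n)) /\
    forall x, A x <-> exists n, C n x.

Definition F_sigma {X : Type} (T : Topology X) (A : X -> Prop) : Prop :=
  countable_union_of (is_closed T) A.

Definition H1 {X Y : Type} (TX : Topology X) (TY : Topology Y) (f : X -> Y) : Prop :=
  forall V, is_open TY V -> F_sigma TX (fun x => V (f x)).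

Definition K1w {X Y : Type} (TX : Topology X) (TY : Topology Y) (f : X -> Y) : Prop :=
  forall V, functionally_open TY V ->
    countable_union_of (functionally_closed TX) (fun x => V (f x)).

Definition compact_space {X : Type} (T : Topology X) : Prop :=
  forall F : (X -> Prop) -> Prop,
    (forall U, F U -> is_open T U) ->
    (forall x, exists U, F U /\ U x) ->
    exists l : list (X -> Prop), (forall U, In U l -> F U) /\
      forall x, exists U, In U l /\ U x.

Definition hausdorff {X : Type} (T : Topology X) : Prop :=
  forall x y : X, x <> y -> exists U V, is_open T U /\ is_open T V /\
    U x /\ V y /\ forall z, ~ (U z /\ V z).

(** Take for Y the one-point compactification of the real line with the
    discrete topology, and for f the inclusion of R.  The irrationals are open
    in Y (they miss the point at infinity), but by Baire's theorem they are not
    an F_sigma subset of R, so f is not in H_1.  A functionally open V = {g <> 0}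
    of Y either contains the point at infinity, and is then cofinite, so that
    its trace on R is the cozero set of a polynomial; or g vanishes at infinity,
    and then each level set {|g| >= 1/(n+1)} is a closed set missing infinity,
    hence finite, hence a zero set in R. *)

From Stdlib Require Import Reals Lra Lia List Classical.
From mathcomp Require Import all_boot classical_sets reals topology normedtype.
From mathcomp Require Import borel_hierarchy Rstruct Rstruct_topology.
Open Scope R_scope.

Section OnePointCompactification.
Variable X : Type.

Definition opc_open (U : option X -> Prop) : Prop :=
  U None -> exists l : list X, forall d, ~ U (Some d) -> In d l.

Lemma opc_open_full : opc_open (fun _ => True).
Proof. by move=> _; exists nil => d []. Qed.

Lemma opc_open_empty : opc_open (fun _ => False).
Proof. by []. Qed.

Lemma opc_open_inter U V : opc_open U -> opc_open V ->
  opc_open (fun x => U x /\ V x).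
Proof.
move=> HU HV [UN VN].
have [l1 H1] := HU UN; have [l2 H2] := HV VN.
exists (l1 ++ l2) => d UVd; apply: in_or_app.
case: (classic (U (Some d))) => Ud; last by left; exact: H1.
by right; apply: H2 => Vd; apply: UVd.
Qed.

Lemma opc_open_union (F : (option X -> Prop) -> Prop) :
  (forall U, F U -> opc_open U) -> opc_open (fun x => exists U, F U /\ U x).
Proof.
move=> HF [U [FU UN]]; have [l Hl] := HF U FU UN.
by exists l => d nFd; apply: Hl => Ud; apply: nFd; exists U.
Qed.

Definition opc_topology : Topology (option X) :=
  {| is_open := opc_open; open_full := opc_open_full;
     open_empty := opc_open_empty; open_inter := opc_open_inter;
     open_union := opc_open_union |}.

Lemma finite_subcover (F : (option X -> Prop) -> Prop) (l : list X) :
  (forall x, exists U, F U /\ U x) ->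
  exists L, (forall U, In U L -> F U) /\
    forall d, In d l -> exists U, In U L /\ U (Some d).
Proof.
move=> cover; elim: l => [|a l [L [FL coverL]]].
  by exists nil; split => ? [].
have [Ua [FUa Uaa]] := cover (Some a).
exists (Ua :: L); split => [U [<-|] | d [<-|/coverL [U [LU Ud]]]] //; auto.
- by exists Ua; split; first left.
- by exists U; split; first right.
Qed.

Lemma opc_compact : compact_space opc_topology.
Proof.
move=> F openF cover.
have [U0 [FU0 U0N]] := cover None.
have [l notU0] := openF U0 FU0 U0N.
have [L [FL coverL]] := finite_subcover F l cover.
exists (U0 :: L); split => [U [<-|] | [d|]] //; auto.
- case: (classic (U0 (Some d))) => [U0d | /notU0 /coverL [U [LU Ud]]].
  + by exists U0; split; first left.
  + by exists U; split; first right.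
- by exists U0; split; first left.
Qed.

Lemma opc_open_Some a : is_open opc_topology (fun z => z = Some a).
Proof. by []. Qed.

Lemma opc_open_neq_Some a : is_open opc_topology (fun z => z <> Some a).
Proof. by move=> _; exists (a :: nil) => d /NNPP [->]; left. Qed.

Lemma opc_hausdorff : hausdorff opc_topology.
Proof.
move=> [a|] [b|] ab //.
- exists (fun z => z = Some a), (fun z => z = Some b).
  by do !split; [exact: opc_open_Some | exact: opc_open_Some | move=> z [-> /ab]].
- exists (fun z => z = Some a), (fun z => z <> Some a).
  by do !split; [exact: opc_open_Some | exact: opc_open_neq_Some | | move=> z []].
- exists (fun z => z <> Some b), (fun z => z = Some b).
  by do !split; [exact: opc_open_neq_Some | exact: opc_open_Some | | move=> z []].
Qed.

End OnePointCompactification.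

Lemma continuous_map_comp {X Y Z : Type} (TX : Topology X) (TY : Topology Y)
  (TZ : Topology Z) (f : X -> Y) (g : Y -> Z) :
  continuous_map TX TY f -> continuous_map TY TZ g ->
  continuous_map TX TZ (fun x => g (f x)).
Proof. by move=> cf cg V /cg /cf. Qed.

Lemma continuous_map_R (h : R -> R) : (forall x, continuity_pt h x) ->
  continuous_map R_topology R_topology h.
Proof.
move=> ch V openV x /openV [e [e0 ballV]].
have [d [d0 hd]] := ch x e e0.
exists d; split => // y yx; apply: ballV.
case: (Req_dec y x) => [-> | neq_yx]; first by rewrite Rminus_diag Rabs_R0.
by apply: hd; do !split => //; exact: nesym.
Qed.

Lemma R_open_abs_lt (c : R) : R_open (fun r => Rabs r < c).
Proof.
move=> r rc; exists (c - Rabs r); split=> [|y yr]; first lra.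
have := Rabs_triang_inv y r; lra.
Qed.

Lemma R_open_neq0 : R_open (fun r => r <> 0).
Proof.
move=> r r0; exists (Rabs r); split => [|y yr y0]; first exact: Rabs_pos_lt.
by move: yr; rewrite y0 Rminus_0_l Rabs_Ropp; lra.
Qed.

Lemma neq0_iff_inv_S_le_abs (r : R) : r <> 0 <-> exists n, / INR (S n) <= Rabs r.
Proof.
split=> [r0 | [n le_r]].
- have [N [N0 lt_r]] := archimed_cor1 (Rabs r) (Rabs_pos_lt r r0).
  by case: N N0 lt_r => [|n] N0 lt_r; [lia | exists n; lra].
- move=> r0; move: le_r; rewrite r0 Rabs_R0.
  have := Rinv_0_lt_compat (INR (S n)) (lt_0_INR _ (Nat.lt_0_succ n)); lra.
Qed.

Section FunctionallyClosedSets.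
Variables (X : Type) (T : Topology X).

Lemma functionally_closed_le_abs (g : X -> R) (c : R) :
  continuous_map T R_topology g -> functionally_closed T (fun x => c <= Rabs (g x)).
Proof.
move=> cg; pose h r := (c - Rabs r) + Rabs (c - Rabs r).
exists (fun x => h (g x)); split.
  apply: continuous_map_comp cg _; apply: continuous_map_R => r.
  have c_sub_abs : continuity_pt (fun r => c - Rabs r) r.
    apply: continuity_pt_minus; first exact: continuity_pt_const.
    exact: Rcontinuity_abs.
  apply: continuity_pt_plus; first exact: c_sub_abs.
  exact: (continuity_pt_comp (fun r => c - Rabs r) Rabs _ c_sub_abs (Rcontinuity_abs _)).
move=> x; rewrite /h; split=> le_c.
  by rewrite (Rabs_left1 (c - _)); lra.
case: (Rle_dec (c - Rabs (g x)) 0) => [|gt_c]; first lra.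
by move: le_c; rewrite (Rabs_right (c - _)); lra.
Qed.

Lemma cozero_countable_union (g : X -> R) : continuous_map T R_topology g ->
  countable_union_of (functionally_closed T) (fun x => g x <> 0).
Proof.
move=> cg; exists (fun n x => / INR (S n) <= Rabs (g x)); split.
  by move=> n; exact: functionally_closed_le_abs.
by move=> x; exact: neq0_iff_inv_S_le_abs.
Qed.

End FunctionallyClosedSets.

Lemma finite_zero_set (l : list R) (S : R -> Prop) : (forall x, S x -> In x l) ->
  exists p : R -> R, (forall x, continuity_pt p x) /\ forall x, S x <-> p x = 0.
Proof.
elim: l S => [|a l IHl] S Sl.
  exists (fun _ => 1); split=> [x | x]; first exact: continuity_pt_const.
  by split=> [/Sl [] | ]; lra.
have [p [cp Sp]] : exists p : R -> R, (forall x, continuity_pt p x) /\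
    forall x, S x /\ x <> a <-> p x = 0.
  by apply: IHl => x [/Sl [-> | //] []].
case: (classic (S a)) => [Sa | nSa].
- exists (fun x => (x - a) * p x); split=> [x | x].
    apply: continuity_pt_mult => //; apply: continuity_pt_minus.
      exact: derivable_continuous_pt (derivable_pt_id x).
    exact: continuity_pt_const.
  split=> [Sx | /Rmult_integral [xa | /Sp [] //]].
    case: (Req_dec x a) => [-> | xa]; first ring.
    by rewrite (proj1 (Sp x)); first ring.
  by have -> : x = a by lra.
- exists p; split=> // x; rewrite -Sp.
  by split=> [Sx | [] //]; split=> // xa; apply: nSa; rewrite -xa.
Qed.

Lemma finite_functionally_closed (l : list R) (S : R -> Prop) :
  (forall x, S x -> In x l) -> functionally_closed R_topology S.
Proof.
move=> /finite_zero_set [p [cp Sp]].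
by exists p; split; first exact: continuous_map_R.
Qed.

Lemma cofinite_countable_union (l : list R) (S : R -> Prop) :
  (forall x, ~ S x -> In x l) -> countable_union_of (functionally_closed R_topology) S.
Proof.
move=> /finite_functionally_closed [p [cp Sp]].
have [C [fcC pC]] := cozero_countable_union _ _ _ cp.
exists C; split=> // x; rewrite -pC -Sp.
by split=> [Sx nSx | /NNPP].
Qed.

Lemma R_open_open (U : R -> Prop) : R_open U -> open (U : set R).
Proof.
move=> HU; rewrite openE => x Ux.
have [e [e0 He]] := HU x Ux.
rewrite /interior -filter_from_ballE; exists e; first exact/RltP.
move=> y; rewrite /ball /= => hy; apply: He.
rewrite Rabs_minus_sym; exact/RltP.
Qed.

Lemma irrational_not_F_sigma : ~ F_sigma R_topology (@irrational R).
Proof.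
move=> [C [closedC irrC]]; apply: (@not_rational_Gdelta R).
exists (fun n x => ~ C n x); first by move=> n; apply: R_open_open; exact: closedC.
apply/seteqP; split => x /= .
- by move=> ratx n _ Cnx; apply: (proj2 (irrC x)); [exists n | ].
- move=> notC; apply: NNPP => /(proj1 (irrC x)) [n Cnx]; exact: (notC n I Cnx).
Qed.

Lemma Some_K1w : K1w R_topology (opc_topology R) Some.
Proof.
move=> V [B [[g [cg gB]] VB]].
have Vg x : V (Some x) <-> g (Some x) <> 0 by rewrite VB gB.
case: (Req_dec (g None) 0) => [gN0 | gN0].
- exists (fun n x => / INR (S n) <= Rabs (g (Some x))); split=> [n | x].
    have small_gN : Rabs (g None) < / INR (S n).
      by rewrite gN0 Rabs_R0; apply/Rinv_0_lt_compat/lt_0_INR; lia.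
    have [l small_l] := cg _ (R_open_abs_lt (/ INR (S n))) small_gN.
    by apply: (finite_functionally_closed l) => x le_x; apply: small_l; lra.
  by rewrite Vg; exact: neq0_iff_inv_S_le_abs.
- have [l zero_l] := cg _ R_open_neq0 gN0.
  by apply: (cofinite_countable_union l) => x /Vg; exact: zero_l.
Qed.

Lemma Some_not_H1 : ~ H1 R_topology (opc_topology R) Some.
Proof.
move=> H1Some; apply: irrational_not_F_sigma.
by apply: (H1Some (fun y => if y is Some x then irrational x else False)).
Qed.

Theorem mainTheorem3 :
  exists (Y : Type) (TY : Topology Y),
    compact_space TY /\ hausdorff TY /\
    exists f : R -> Y, K1w R_topology TY f /\ ~ H1 R_topology TY f.
Proof.
exists (option R), (opc_topology R).
split; first exact: opc_compact.
split; first exact: opc_hausdorff.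
by exists Some; split; [exact: Some_K1w | exact: Some_not_H1].
Qed.
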